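(* Let $\mathbb P$ be an LTF, $n\ge1$, $P\in\mathbf{LC}_n(\mathbb P)$, and let $D\subseteq\mathbb P\times_{E_0}\mathbb P$ be open dense in $\mathbb P\times_{E_0}\mathbb P$. Then there is $Q\in\mathbf{LC}_n(\mathbb P)$ with $Q\subseteq_n P$ such that $\langle Q(\to s),Q(\to t)\rangle\in D$ whenever $s,t\in 2^n$ and $s(n-1)\ne t(n-1)$.
   Context: Notation. $2^{<\omega}$ is the set of finite binary strings, $\Lambda$ the empty string, $\mathrm{lh}(s)$ the length of $s$, $2^n$ the set of strings of length $n$, $s\subseteq t$ means $t$ extends $s$, $s^\frown t$ concatenation. For strings $s,t$ with $\mathrm{lh}(s)\le\mathrm{lh}(t)$, $s\cdot t$ is the string of length $\mathrm{lh}(t)$ with $(s\cdot t)(k)=t(k)+s(k)\bmod 2$ for $k<\mathrm{lh}(s)$ and $(s\cdot t)(k)=t(k)$ otherwise; if $\mathrm{lh}(s)>\mathrm{lh}(t)$ then $s\cdot t=(s\restriction\mathrm{lh}(t))\cdot t$. For $T\subseteq 2^{<\omega}$, $s\cdot T=\{s\cdot t:t\in T\}$. For a tree $T$ and $s\in T$, $T\upharpoonright s=\{t\in T:s\subseteq t\lor t\subseteq s\}$. A perfect tree is a nonempty tree $T\subseteq 2^{<\omega}$ with no endpoints and no isolated branches; its stem $\mathrm{stem}(T)$ is the largest $s\in T$ with $T=T\upharpoonright s$. A perfect tree $T$ is large, written $T\in\mathbf{LT}$, if there are nonempty strings $q^i_n$ ($n<\omega$, $i=0,1$) with $\mathrm{lh}(q^0_n)=\mathrm{lh}(q^1_n)\ge1$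 and $q^i_n(0)=i$, such that $T$ consists exactly of all initial segments of strings $r^\frown q^{i(0)}_0{}^\frown\cdots{}^\frown q^{i(n)}_n$, where $r=\mathrm{stem}(T)$, $n<\omega$, $i(0),\dots,i(n)\in\{0,1\}$. Its splitting levels are $\mathrm{spl}_0(T)=\mathrm{lh}(r)$, $\mathrm{spl}_{n+1}(T)=\mathrm{spl}_n(T)+\mathrm{lh}(q^0_n)$. For $T\in\mathbf{LT}$ and $i\in\{0,1\}$, $T(\to i)=T\upharpoonright(\mathrm{stem}(T)^\frown i)$; for $s\in 2^n$ with $n\ge1$, $T(\to s)=(\cdots((T(\to s(0)))(\to s(1)))\cdots)(\to s(n-1))$, and $T(\to\Lambda)=T$. For $S,T\in\mathbf{LT}$ and $n<\omega$, $S\subseteq_n T$ means $S\subseteq T$ and $\mathrm{spl}_k(S)=\mathrm{spl}_k(T)$ for all $k<n$. A large-tree forcing notion (LTF) is a set $\mathbb P\subseteq\mathbf{LT}$ such that $T\upharpoonright u\in\mathbb P$ whenever $u\in T\in\mathbb P$, and $s\cdot T\in\mathbb P$ whenever $T\in\mathbb P$ and $s\in 2^{<\omega}$; it is ordered by inclusion (smaller trees are stronger conditions). A tree $T\in\mathbf{LT}$ is an $n$-collage over $\mathbb P$ if $T(\to s)\in\mathbb P$ for all $s\in 2^n$; $\mathbf{LC}_n(\mathbb P)$ denotes the set of such trees. The conditional product $\mathbb P\times_{E_0}\mathbb P$ is the set of pairs $\langle T,T'\rangle$ of trees $T,T'\in\mathbb P$ such that $T'=s\cdot T$ for some $s\in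 2^{<\omega}$, ordered componentwise: $\langle S,S'\rangle\le\langle T,T'\rangle$ iff $S\subseteq T$ and $S'\subseteq T'$. *)

From mathcomp Require Import all_boot.
From Stdlib Require Import ClassicalEpsilon.
Set Implicit Arguments. Unset Strict Implicit. Unset Printing Implicit Defensive.

Definition str := seq bool.
Definition tree := str -> Prop.

(* s ⊆ t (t extends s) is [prefix s t] from seq.v *)

(* s . t : flip the bits of t at positions k < lh(s) where s(k) = 1 *)
Definition dot (s t : str) : str :=
  mkseq (fun k => addb (nth false t k) (nth false s k)) (size t).

Definition dotT (s : str) (T : tree) : tree :=
  fun u => exists2 t, T t & u = dot s t.

Definition restr (T : tree) (u : str) : tree :=
  fun t => T t /\ (prefix u t \/ prefix t u).

Definition is_tree (T : tree) : Prop :=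
  forall s t, T t -> prefix s t -> T s.

Definition perfect_tree (T : tree) : Prop :=
  [/\ (exists t, T t), is_tree T,
      (forall t, T t -> exists b, T (rcons t b))
    & (forall t, T t -> exists2 u, prefix t u &
                    T (rcons u false) /\ T (rcons u true)) ].

Definition is_stem (T : tree) (r : str) : Prop :=
  [/\ T r, (forall t, T t -> prefix r t \/ prefix t r)
    & (forall r', T r' -> (forall t, T t -> prefix r' t \/ prefix t r') ->
          size r' <= size r) ].

Definition stem (T : tree) : str := epsilon (inhabits [::]) (is_stem T).

Definition LT_data (T : tree) (r : str) (q : nat -> bool -> str) : Prop :=
  [/\ is_stem T r,
      (forall n, size (q n false) = size (q n true)),
      (forall n, 1 <= size (q n false)),
      (forall n i, nth false (q n i) 0 = i)
    & (forall u, T u <-> exists n (c : nat -> bool),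
          prefix u (r ++ flatten (mkseq (fun k => q k (c k)) n.+1)))].

Definition LT (T : tree) : Prop :=
  perfect_tree T /\ exists r q, LT_data T r q.

Definition is_spl (T : tree) (k m : nat) : Prop :=
  exists r q, LT_data T r q /\ m = size r + \sum_(j < k) size (q j false).

Definition spl (T : tree) (k : nat) : nat := epsilon (inhabits 0) (is_spl T k).

Definition to1 (T : tree) (i : bool) : tree := restr T (rcons (stem T) i).
Definition toS (T : tree) (s : str) : tree := foldl to1 T s.

Definition subtree (S T : tree) : Prop := forall u, S u -> T u.

Definition sub_n (S T : tree) (n : nat) : Prop :=
  subtree S T /\ forall k, k < n -> spl S k = spl T k.

Definition LTF (P : tree -> Prop) : Prop :=
  [/\ (forall T, P T -> LT T),
      (forall T u, P T -> T u -> P (restr T u))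
    & (forall T s, P T -> P (dotT s T))].

Definition LC (n : nat) (P : tree -> Prop) (T : tree) : Prop :=
  LT T /\ forall s : str, size s = n -> P (toS T s).

Definition cprod (P : tree -> Prop) (T T' : tree) : Prop :=
  [/\ P T, P T' & exists s, forall u, T' u <-> dotT s T u].

Definition cprod_le (S S' T T' : tree) : Prop := subtree S T /\ subtree S' T'.

Definition open_dense (P : tree -> Prop) (D : tree -> tree -> Prop) : Prop :=
  [/\ (forall T T', D T T' -> cprod P T T'),
      (forall T T' S S', D T T' -> cprod P S S' -> cprod_le S S' T T' -> D S S')
    & (forall T T', cprod P T T' ->
          exists S S', D S S' /\ cprod_le S S' T T')].

From mathcomp Require Import all_boot zify.
From Stdlib Require Import ClassicalEpsilon FunctionalExtensionality PropExtensionality.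
Set Implicit Arguments. Unset Strict Implicit. Unset Printing Implicit Defensive.

(** A large tree with stem [r] and splitting blocks [q] is a perfect tree all
   of whose nodes at a given level choose the same block; its [n]-collage
   branches [T(-> s)] are again large trees with common blocks, and any two of
   them differ by a translation [w . _].  To meet [D] at one pair [(s, t)] of
   branches with different last bit we find, below the pair, a pair
   [(X, v . X)] in [D] with [X] a large tree; then [X] and [v . X] share
   their tail blocks and their stems extend those of the two branches.
   Appending the two stem extensions to block [n-1] (one for each value of the
   last bit) and replacing all later blocks by the common tail yields a
   collage whose branches are translates of [X] or [v . X], hence shrink the
   old branches, stay in [P], and whose [(s, t)] branches are exactly
   [(X, v . X)].  Splitting levels below [n] are untouched, and iterating over
   the finitely many pairs of branches proves the theorem. *)

Lemma prefix_size_eq (u v : str) : prefix u v -> size u = size v -> u = v.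
Proof.
move=> /prefixP[w ->]; rewrite size_cat => /eqP; rewrite -{1}[size u]addn0 eqn_add2l.
by rewrite eq_sym size_eq0 => /eqP ->; rewrite cats0.
Qed.

Lemma prefix_nth (u v : str) i : prefix u v -> i < size u -> nth false u i = nth false v i.
Proof. by move=> /prefixP[w ->] hi; rewrite nth_cat hi. Qed.

Lemma prefix_total (u v w : str) : prefix u w -> prefix v w -> prefix u v \/ prefix v u.
Proof.
rewrite !prefixE => /eqP hu /eqP hv.
case: (leqP (size u) (size v)) => h; first by left; rewrite -hv take_takel // hu.
by right; rewrite -hu take_takel ?hv // ltnW.
Qed.

Lemma prefix_comparable_size (u v : str) :
  prefix u v \/ prefix v u -> size u <= size v -> prefix u v.
Proof.
case=> // h hs; suff -> : u = v by exact: prefix_refl.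
by apply/esym/(prefix_size_eq h)/eqP; rewrite eqn_leq hs size_prefix.
Qed.

Lemma prefix_rcons_nth (t z : str) : prefix t z -> size t < size z ->
  prefix (rcons t (nth false z (size t))) z.
Proof.
move=> /prefixP[[|x w] ->]; first by rewrite cats0 ltnn.
by rewrite nth_cat ltnn subnn /= -cat_rcons prefix_prefix.
Qed.

Lemma prefix_rconsE (u r : str) i : prefix u (rcons r i) -> u = rcons r i \/ prefix u r.
Proof.
move=> h; case: (leqP (size u) (size r)) => hs.
  right; move: h; rewrite !prefixE -cats1 take_cat.
  case: ltnP => hl //; have -> : size u = size r by apply/eqP; rewrite eqn_leq hs hl.
  by rewrite subnn take0 cats0 take_size.
left; apply: (prefix_size_eq h); apply/eqP.
by rewrite eqn_leq size_prefix // size_rcons.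
Qed.

Lemma prefix_both_rcons (r a : str) :
  (prefix (rcons r false) a \/ prefix a (rcons r false)) ->
  (prefix (rcons r true) a \/ prefix a (rcons r true)) -> prefix a r.
Proof.
move=> h0 h1; case: (leqP (size a) (size r)) => hs.
  case: h0 => [/size_prefix|/prefix_rconsE[eq_a|//]].
    by rewrite size_rcons ltnNge hs.
  by move: hs; rewrite eq_a size_rcons ltnn.
have p0 : prefix (rcons r false) a by apply: prefix_comparable_size h0 _; rewrite size_rcons.
have p1 : prefix (rcons r true) a by apply: prefix_comparable_size h1 _; rewrite size_rcons.
have := @prefix_nth _ _ (size r) p0; have := @prefix_nth _ _ (size r) p1.
by rewrite !nth_rcons ltnn eqxx !size_rcons ltnSn => /(_ isT) <- /(_ isT).
Qed.

(** * Large trees given by a stem and splitting blocks *)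

Definition large_blocks (q : nat -> bool -> str) :=
  [/\ forall n, size (q n false) = size (q n true),
      forall n, 1 <= size (q n false)
    & forall n i, nth false (q n i) 0 = i].

Definition large_tree (r : str) (q : nat -> bool -> str) : tree :=
  fun u => exists n (c : nat -> bool),
    prefix u (r ++ flatten (mkseq (fun k => q k (c k)) n.+1)).

Definition branch (r : str) (q : nat -> bool -> str) (c : nat -> bool) m :=
  r ++ flatten (mkseq (fun k => q k (c k)) m).

Definition shift_blocks m (q : nat -> bool -> str) := fun k => q (m + k).

Section Blocks.

Variable q : nat -> bool -> str.
Hypothesis hq : large_blocks q.

Lemma large_blocks_shift m : large_blocks (shift_blocks m q).
Proof. by case: hq => h1 h2 h3; split=> *; [exact: h1|exact: h2|exact: h3]. Qed.

Lemma size_block_gt0 n b : 0 < size (q n b).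
Proof. by case: hq => h1 h2 _; case: b; rewrite -?h1 h2. Qed.

Lemma block_head n b : q n b = b :: behead (q n b).
Proof.
have := size_block_gt0 n b; case: hq => _ _ /(_ n b).
by case: (q n b) => [|x l] //= ->.
Qed.

Lemma prefix_rcons_block r b : prefix (rcons r b) (r ++ q 0 b).
Proof. by rewrite block_head -cat_rcons prefix_prefix. Qed.

Lemma size_branch r c m : size r + m <= size (branch r q c m).
Proof.
elim: m => [|m IH]; first by rewrite /branch addn0 size_cat leq_addr.
rewrite /branch mkseqS flatten_rcons catA size_cat addnS -addn1.
exact: leq_add IH (size_block_gt0 _ _).
Qed.

End Blocks.

Lemma branchS r q c m : branch r q c m.+1 = branch r q c m ++ q m (c m).
Proof. by rewrite /branch mkseqS flatten_rcons catA. Qed.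

Lemma branch_mono r q c m m' : m <= m' -> prefix (branch r q c m) (branch r q c m').
Proof.
move=> /subnK <-; elim: (m' - m) => [|d IH]; first exact: prefix_refl.
by rewrite addSn branchS; apply: prefix_catl.
Qed.

Lemma eq_branch r q c c' m :
  (forall k, k < m -> c k = c' k) -> branch r q c m = branch r q c' m.
Proof. elim: m => [//|m IH] h; rewrite !branchS IH ?h // => k hk; exact/h/ltnW. Qed.

Lemma branch_shift r q c m :
  branch r q c m.+1 = branch (r ++ q 0 (c 0)) (shift_blocks 1 q) (fun k => c k.+1) m.
Proof.
rewrite /branch /mkseq /= -[1]/(1 + 0) iotaDl -map_comp catA.
by congr (_ ++ flatten _); apply: eq_map.
Qed.

Lemma large_treeE r q u : large_tree r q u <-> exists m c, prefix u (branch r q c m).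
Proof.
split; first by case=> m [c h]; exists m.+1, c.
case=> m [c h]; exists m, c; exact/(prefix_trans h)/branch_mono.
Qed.

Lemma large_tree_stem r q u : prefix u r -> large_tree r q u.
Proof. by move=> h; apply/large_treeE; exists 0, (fun _ => false); exact: prefix_catl. Qed.

Lemma large_tree_split1 r q u :
  large_tree r q u <-> exists i, large_tree (r ++ q 0 i) (shift_blocks 1 q) u.
Proof.
split.
  case=> m [c h]; exists (c 0); apply/large_treeE; exists m, (fun k => c k.+1).
  by rewrite -branch_shift.
case=> i /large_treeE [m [c h]]; apply/large_treeE.
by exists m.+1, (fun k => if k is k'.+1 then c k' else i); rewrite branch_shift.
Qed.

Lemma large_tree_rcons_stem r q b : large_blocks q -> large_tree r q (rcons r b).
Proof.
by move=> hq; apply/large_tree_split1; exists b; apply/large_tree_stem/prefix_rcons_block.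
Qed.

Lemma large_tree_comparable r q u : large_tree r q u -> prefix r u \/ prefix u r.
Proof. by move=> /large_treeE [m [c h]]; apply: (prefix_total _ h); exact: prefix_prefix. Qed.

Lemma is_stem_large_tree r q : large_blocks q -> is_stem (large_tree r q) r.
Proof.
move=> hq; split; first exact/large_tree_stem/prefix_refl.
  by move=> t /large_tree_comparable.
move=> r' _ h; apply/size_prefix/prefix_both_rcons.
  by case: (h _ (large_tree_rcons_stem r false hq)); auto.
by case: (h _ (large_tree_rcons_stem r true hq)); auto.
Qed.

Lemma is_stem_uniq T r1 r2 : is_stem T r1 -> is_stem T r2 -> r1 = r2.
Proof.
case=> h1 c1 m1 [h2 c2 m2].
have e : size r2 = size r1 by apply/eqP; rewrite eqn_leq m1 // m2.
by case: (c1 _ h2) => p; [rewrite (prefix_size_eq p (esym e)) | rewrite (prefix_size_eq p e)].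
Qed.

Lemma stemE T r : is_stem T r -> stem T = r.
Proof.
move=> h; apply: (is_stem_uniq _ h).
exact: (epsilon_spec (inhabits [::]) (is_stem T) (ex_intro _ r h)).
Qed.

Lemma stem_large_tree r q : large_blocks q -> stem (large_tree r q) = r.
Proof. by move=> hq; apply/stemE/is_stem_large_tree. Qed.

Lemma perfect_large_tree r q : large_blocks q -> perfect_tree (large_tree r q).
Proof.
move=> hq; split.
- by exists r; apply/large_tree_stem/prefix_refl.
- move=> s t /large_treeE [m [c h]] p; apply/large_treeE; exists m, c; exact: prefix_trans p h.
- move=> t /large_treeE [m [c h]].
  pose M := (maxn m (size t)).+1.
  have hM : prefix t (branch r q c M).
    by apply/(prefix_trans h)/branch_mono; rewrite leqW // leq_maxl.
  have hs : size t < size (branch r q c M).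
    apply: leq_trans (size_branch hq r c M); rewrite /M addnS ltnS.
    exact: leq_trans (leq_maxr m _) (leq_addl _ _).
  exists (nth false (branch r q c M) (size t)); apply/large_treeE; exists M, c.
  exact: prefix_rcons_nth.
- move=> t /large_treeE [m [c h]]; exists (branch r q c m) => //.
  have ext b : large_tree r q (rcons (branch r q c m) b).
    apply/large_treeE; exists m.+1, (fun k => if k == m then b else c k).
    rewrite branchS (@eq_branch _ _ _ c); last by move=> k hk; rewrite (ltn_eqF hk).
    by rewrite eqxx block_head // -cat_rcons prefix_prefix.
  by split; apply: ext.
Qed.

Lemma LT_data_large_tree r q : large_blocks q -> LT_data (large_tree r q) r q.
Proof. by move=> hq; case: (hq) => h1 h2 h3; split=> //; exact: is_stem_large_tree. Qed.

Lemma LT_large_tree r q : large_blocks q -> LT (large_tree r q).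
Proof.
by move=> hq; split; [exact: perfect_large_tree | exists r, q; exact: LT_data_large_tree].
Qed.

Lemma tree_ext (T T' : tree) : (forall u, T u <-> T' u) -> T = T'.
Proof. by move=> h; apply: functional_extensionality => u; apply: propositional_extensionality. Qed.

Lemma LT_dataE T r q : LT_data T r q -> large_blocks q /\ T = large_tree r q.
Proof. by case=> _ h1 h2 h3 h4; split; [split | apply: tree_ext]. Qed.

Lemma LT_large_treeE T : LT T -> exists r q, large_blocks q /\ T = large_tree r q.
Proof. by case=> _ [r [q /LT_dataE h]]; exists r, q. Qed.

Fixpoint node (r : str) (q : nat -> bool -> str) (s : str) : str :=
  if s is i :: s' then node (r ++ q 0 i) (shift_blocks 1 q) s' else r.

Lemma shift_blocks0 q : shift_blocks 0 q = q.
Proof. exact: functional_extensionality. Qed.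

Lemma shift_blocksS m q : shift_blocks m (shift_blocks 1 q) = shift_blocks m.+1 q.
Proof. by apply: functional_extensionality => k; rewrite /shift_blocks add1n addSn. Qed.

Lemma node_rcons r q s b : node r q (rcons s b) = node r q s ++ q (size s) b.
Proof. by elim: s r q => [|i s IH] r q //=; rewrite IH. Qed.

Lemma eq_node r q q' s : (forall j, j < size s -> q' j = q j) -> node r q' s = node r q s.
Proof.
elim: s r q q' => [|i s IH] r q q' h //=.
rewrite h // (IH _ (shift_blocks 1 q)) // => j hj; rewrite /shift_blocks h //= add1n ltnS.
Qed.

Lemma size_node r r' q s t : large_blocks q -> size r = size r' -> size s = size t ->
  size (node r q s) = size (node r' q t).
Proof.
elim: s r r' q t => [|i s IH] r r' q [|j t] hq //= hr [] hs.
apply: IH hs; first exact: large_blocks_shift.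
by case: hq => h1 _ _; rewrite !size_cat hr; case: i; case: j; rewrite ?h1.
Qed.

Lemma size_node_ge r q s : large_blocks q -> size r + size s <= size (node r q s).
Proof.
elim: s r q => [|i s IH] r q hq /=; first by rewrite addn0.
apply: (leq_trans _ (IH (r ++ q 0 i) _ (large_blocks_shift hq 1))); rewrite size_cat.
have := size_block_gt0 hq 0 i; lia.
Qed.

Lemma large_tree_split n r q u :
  large_tree r q u <->
  exists s, size s = n /\ large_tree (node r q s) (shift_blocks n q) u.
Proof.
elim: n r q => [|n IH] r q.
  by rewrite shift_blocks0; split; [exists [::] | case=> s [/size0nil -> ]].
rewrite large_tree_split1; split.
  case=> i /IH [s [hs h]]; exists (i :: s); split; first by rewrite /= hs.
  by rewrite /= -shift_blocksS.
by case=> [[|i s] []] //= [hs] h; exists i; apply/IH; exists s; rewrite shift_blocksS.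
Qed.

Lemma to1_large_tree r q i : large_blocks q ->
  to1 (large_tree r q) i = large_tree (r ++ q 0 i) (shift_blocks 1 q).
Proof.
move=> hq; apply: tree_ext => u; rewrite /to1 /restr stem_large_tree //.
have hri := prefix_rcons_block hq r i.
split; last first.
  move=> h; split; first by apply/large_tree_split1; exists i.
  case: (large_tree_comparable h) => h'; last exact: prefix_total hri h'.
  by left; exact: prefix_trans hri h'.
case=> /large_tree_split1 [j hj] hc; have [-> //|ne_ij] := eqVneq i j.
have {}hc : prefix (rcons r i) u \/ prefix u r.
  by case: hc => [|/prefix_rconsE[->|]]; [left | left; exact: prefix_refl | right].
case: hc => hc; last exact/large_tree_stem/(prefix_trans hc)/prefix_prefix.
have hrj := prefix_rcons_block hq r j.
have : prefix (rcons r i) (rcons r j) \/ prefix (rcons r j) (rcons r i).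
  case: (large_tree_comparable hj) => h.
    exact: prefix_total hc (prefix_trans hrj h).
  exact: prefix_total (prefix_trans hc h) hrj.
by case=> /prefix_size_eq; rewrite !size_rcons => /(_ erefl) /rcons_inj [eq_ij];
  rewrite eq_ij eqxx in ne_ij.
Qed.

Lemma toS_large_tree r q s : large_blocks q ->
  toS (large_tree r q) s = large_tree (node r q s) (shift_blocks (size s) q).
Proof.
elim: s r q => [|i s IH] r q hq; first by rewrite shift_blocks0.
by rewrite /toS /= -/(toS _ s) to1_large_tree // IH //; exact: large_blocks_shift.
Qed.

Lemma toS_subtree (T : tree) s : subtree (toS T s) T.
Proof. by elim: s T => [|i s IH] T u //= /IH []. Qed.

(* The blocks are read off the stems of the branches [T(-> b)]. *)
Lemma large_tree_blocks_uniq r q q' : large_blocks q -> large_blocks q' ->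
  large_tree r q = large_tree r q' -> forall j b, q j b = q' j b.
Proof.
have to1_eq r0 q0 q0' b : large_blocks q0 -> large_blocks q0' ->
    large_tree r0 q0 = large_tree r0 q0' ->
    large_tree (r0 ++ q0 0 b) (shift_blocks 1 q0) = large_tree (r0 ++ q0' 0 b) (shift_blocks 1 q0').
  by move=> h h' e; rewrite -!to1_large_tree // e.
have head r0 q0 q0' b : large_blocks q0 -> large_blocks q0' ->
    large_tree r0 q0 = large_tree r0 q0' -> q0 0 b = q0' 0 b.
  move=> h h' /(to1_eq _ _ _ b h h') /(congr1 stem).
  rewrite !stem_large_tree; try exact: large_blocks_shift.
  by move/eqP; rewrite eqseq_cat // => /andP[_ /eqP].
move=> hq hq' e j; elim: j r q q' hq hq' e => [|j IH] r q q' hq hq' e b.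
  exact: (head _ _ _ b hq hq' e).
have := to1_eq _ _ _ false hq hq' e; rewrite (head _ _ _ false hq hq' e).
by move/(IH _ _ _ (large_blocks_shift hq 1) (large_blocks_shift hq' 1))/(_ b).
Qed.

Lemma spl_large_tree r q k : large_blocks q ->
  spl (large_tree r q) k = size r + \sum_(j < k) size (q j false).
Proof.
move=> hq; have spl_ex : exists m, is_spl (large_tree r q) k m.
  by exists (size r + \sum_(j < k) size (q j false)), r, q; split=> //; exact: LT_data_large_tree.
have [r' [q' [hd ->]]] : is_spl (large_tree r q) k (spl (large_tree r q) k).
  exact: (epsilon_spec (inhabits 0) _ spl_ex).
have er : r' = r by case: hd => h _ _ _ _; exact: is_stem_uniq h (is_stem_large_tree r hq).
subst r'; case/LT_dataE: hd => hq' e.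
by congr (_ + _); apply: eq_bigr => j _; rewrite (large_tree_blocks_uniq hq hq' e).
Qed.

(** * Translations *)

Lemma size_dot w t : size (dot w t) = size t.
Proof. exact: size_mkseq. Qed.

Lemma nth_dot w t k : k < size t -> nth false (dot w t) k = nth false t k (+) nth false w k.
Proof. exact: nth_mkseq. Qed.

Lemma dot_cat w x y : dot w (x ++ y) = dot w x ++ dot (drop (size x) w) y.
Proof.
apply: (@eq_from_nth _ false); first by rewrite size_cat !size_dot size_cat.
move=> k; rewrite size_dot => hk; rewrite nth_dot // [RHS]nth_cat size_dot.
case: ltnP => hkx; first by rewrite nth_dot // nth_cat hkx.
have hk' : k - size x < size y by rewrite -(ltn_add2l (size x)) subnKC // -size_cat.
by rewrite nth_dot // nth_drop subnKC // nth_cat ltnNge hkx.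
Qed.

Lemma dot0s y : dot [::] y = y.
Proof.
apply: (@eq_from_nth _ false); first by rewrite size_dot.
by move=> k; rewrite size_dot => hk; rewrite nth_dot // nth_nil addbF.
Qed.

Lemma dot_cat_short w x y : size w <= size x -> dot w (x ++ y) = dot w x ++ y.
Proof. by move=> h; rewrite dot_cat drop_oversize // dot0s. Qed.

Lemma dotK w : involutive (dot w).
Proof.
move=> t; apply: (@eq_from_nth _ false); first by rewrite !size_dot.
by move=> k; rewrite !size_dot => hk; rewrite !nth_dot ?size_dot // addbK.
Qed.

Lemma dot_dot_same_size a b : size a = size b -> dot (dot a b) a = b.
Proof.
move=> h; apply: (@eq_from_nth _ false); first by rewrite !size_dot.
move=> k; rewrite !size_dot => hk; rewrite !nth_dot -?h //.
by case: (nth false a k); case: (nth false b k).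
Qed.

Lemma dot_prefix w u t : prefix u t -> prefix (dot w u) (dot w t).
Proof. by move=> /prefixP [z ->]; rewrite dot_cat prefix_prefix. Qed.

Lemma dot_branch w r q c m :
  size w <= size r -> dot w (branch r q c m) = branch (dot w r) q c m.
Proof. exact: dot_cat_short. Qed.

Lemma dotT_large_tree w r q : size w <= size r -> dotT w (large_tree r q) = large_tree (dot w r) q.
Proof.
move=> hw; apply: tree_ext => u; split.
  case=> t /large_treeE [m [c /(dot_prefix w)]]; rewrite dot_branch // => h ->.
  by apply/large_treeE; exists m, c.
move=> /large_treeE [m [c]]; rewrite -dot_branch // => /(dot_prefix w); rewrite dotK => h.
by exists (dot w u); [apply/large_treeE; exists m, c | rewrite dotK].
Qed.

Lemma subtree_dotT w (S T : tree) : subtree S T -> subtree (dotT w S) (dotT w T).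
Proof. by move=> h u [t ht ->]; exists t => //; apply: h. Qed.

Lemma dotT_large_tree_cat a c e K : size a = size c ->
  dotT (dot a c) (large_tree (a ++ e) K) = large_tree (c ++ e) K.
Proof.
move=> h; rewrite dotT_large_tree; last by rewrite size_dot size_cat -h leq_addr.
by rewrite dot_cat_short ?size_dot -?h // dot_dot_same_size.
Qed.

Lemma dotT_large_tree_same_size a c K : size a = size c ->
  dotT (dot a c) (large_tree a K) = large_tree c K.
Proof. by move=> h; have := dotT_large_tree_cat [::] K h; rewrite !cats0. Qed.

Lemma toS_large_tree_translate r q s t : large_blocks q -> size s = size t ->
  toS (large_tree r q) t = dotT (dot (node r q s) (node r q t)) (toS (large_tree r q) s).
Proof.
move=> hq hst; rewrite !toS_large_tree // hst dotT_large_tree_same_size //.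
exact: size_node.
Qed.

(** * Grafting new blocks onto level [m] *)

Definition graft m (q : nat -> bool -> str) (e : bool) (ex ey : str) (K : nat -> bool -> str) :=
  fun j => if j < m then q j
           else if j == m then fun b => q m b ++ (if b == e then ex else ey)
           else K (j - m.+1).

Section Graft.

Variables (m : nat) (q K : nat -> bool -> str) (e : bool) (ex ey : str).
Hypotheses (hq : large_blocks q) (hK : large_blocks K) (hexy : size ex = size ey).

Lemma large_blocks_graft : large_blocks (graft m q e ex ey K).
Proof.
case: hq => q1 q2 q3; case: hK => k1 k2 k3; rewrite /graft; split=> j.
- case: (ltnP j m) => _; first exact: q1.
  case: (j =P m) => _; last exact: k1.
  by rewrite !size_cat q1; case: ifP; case: ifP; rewrite ?hexy.
- case: (ltnP j m) => _; first exact: q2.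
  by case: (j =P m) => _; [rewrite size_cat ltn_addr | exact: k2].
- move=> i; case: (ltnP j m) => _; first exact: q3.
  by case: (j =P m) => _; [rewrite nth_cat size_block_gt0 | exact: k3].
Qed.

Lemma graft_low j : j < m -> graft m q e ex ey K j = q j.
Proof. by rewrite /graft => ->. Qed.

Lemma shift_blocks_graft : shift_blocks m.+1 (graft m q e ex ey K) = K.
Proof.
apply: functional_extensionality => k; rewrite /shift_blocks /graft.
have -> : (m.+1 + k < m) = false by lia.
have -> : (m.+1 + k == m) = false by lia.
by rewrite addKn.
Qed.

Lemma toS_graft r s : size s = m.+1 ->
  toS (large_tree r (graft m q e ex ey K)) s =
  large_tree (node r q s ++ (if nth false s m == e then ex else ey)) K.
Proof.
case/lastP: s => // s b; rewrite size_rcons => -[hs].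
rewrite toS_large_tree; last exact: large_blocks_graft.
rewrite size_rcons hs shift_blocks_graft !node_rcons.
rewrite (@eq_node r q) => [|j]; last by rewrite hs; exact: graft_low.
by rewrite /graft hs ltnn eqxx nth_rcons hs ltnn eqxx catA.
Qed.

End Graft.

Lemma LT_rcons_stem T b : LT T -> T (rcons (stem T) b).
Proof.
by case/LT_large_treeE=> r [q [hq ->]]; rewrite stem_large_tree //; exact: large_tree_rcons_stem.
Qed.

Lemma large_subtree_stem x K a K0 : large_blocks K ->
  subtree (large_tree x K) (large_tree a K0) -> prefix a x.
Proof.
move=> hK h; apply: prefix_both_rcons.
  by case: (large_tree_comparable (h _ (large_tree_rcons_stem x false hK))); auto.
by case: (large_tree_comparable (h _ (large_tree_rcons_stem x true hK))); auto.
Qed.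

Definition sub_branches n (T' T : tree) :=
  forall s, size s = n -> subtree (toS T' s) (toS T s).

Lemma sub_branches_trans n T1 T2 T3 :
  sub_branches n T1 T2 -> sub_branches n T2 T3 -> sub_branches n T1 T3.
Proof. by move=> h12 h23 s hs u /(h12 s hs) /(h23 s hs). Qed.

Lemma subtree_of_branches n r q q' : large_blocks q -> large_blocks q' ->
  sub_branches n (large_tree r q') (large_tree r q) ->
  subtree (large_tree r q') (large_tree r q).
Proof.
move=> hq hq' h u /(large_tree_split n) [s [hs hu]]; apply/(large_tree_split n).
by exists s; split=> //; have := h s hs u; rewrite !toS_large_tree // hs; apply.
Qed.

(** * Meeting an open dense set on pairs of branches *)

Section Fusion.

Variables (P : tree -> Prop) (D : tree -> tree -> Prop).
Hypotheses (hP : LTF P) (hD : open_dense P D).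

Lemma LTF_toS T s : P T -> P (toS T s).
Proof.
case: hP => hLT hrestr _; elim: s T => [|i s IH] T //= PT.
by apply: IH; apply: (hrestr _ _ PT); exact: (LT_rcons_stem _ (hLT _ PT)).
Qed.

Lemma cprod_toS n r q s t : large_blocks q -> LC n P (large_tree r q) ->
  size s = n -> size t = n -> cprod P (toS (large_tree r q) s) (toS (large_tree r q) t).
Proof.
move=> hq [_ hLC] hs ht; split; [exact: hLC | exact: hLC |].
exists (dot (node r q s) (node r q t)) => u.
by rewrite (@toS_large_tree_translate r q s t) // hs ht.
Qed.

(* With [S' = v . S], shrink [S] to a branch [X] whose stem is longer than [v];
   then [v . X] is a large tree with the same blocks as [X]. *)
Lemma D_large_pair S S' : D S S' -> exists x y K,
  [/\ large_blocks K, size x = size y, subtree (large_tree x K) S,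
      subtree (large_tree y K) S' & D (large_tree x K) (large_tree y K)].
Proof.
case: hD => hD1 hD2 _; case: hP => hLT _ hdot hSS'.
have [PS _ [v hv]] := hD1 _ _ hSS'.
have [rho [ka [hka eS]]] := LT_large_treeE (hLT _ PS); subst S.
pose x := node rho ka (nseq (size v) false); pose K := shift_blocks (size v) ka.
have eX : toS (large_tree rho ka) (nseq (size v) false) = large_tree x K.
  by rewrite toS_large_tree // size_nseq.
have hvx : size v <= size x.
  by apply: leq_trans (size_node_ge _ _ hka); rewrite size_nseq leq_addl.
have eY : dotT v (large_tree x K) = large_tree (dot v x) K := dotT_large_tree _ hvx.
have XS : subtree (large_tree x K) (large_tree rho ka) by rewrite -eX; exact: toS_subtree.
have YS' : subtree (large_tree (dot v x) K) S'.
  by rewrite -eY => u /(subtree_dotT XS) /hv.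
have PX : P (large_tree x K) by rewrite -eX; exact: LTF_toS.
exists x, (dot v x), K; split=> //; first exact: large_blocks_shift.
  by rewrite size_dot.
apply: hD2 hSS' _ (conj XS YS'); split=> //; first by rewrite -eY; exact: hdot.
by exists v => u; rewrite eY.
Qed.

Lemma D_below_large_pair a b K0 : size a = size b ->
  cprod P (large_tree a K0) (large_tree b K0) -> exists ex ey K,
  [/\ large_blocks K, size ex = size ey,
      subtree (large_tree (a ++ ex) K) (large_tree a K0),
      subtree (large_tree (b ++ ey) K) (large_tree b K0)
    & D (large_tree (a ++ ex) K) (large_tree (b ++ ey) K)].
Proof.
case: hD => _ _ hD3 hab /hD3 [S [S' [hSS' [SA SB]]]].
have [x [y [K [hK hxy XS YS' hXY]]]] := D_large_pair hSS'.
have XA : subtree (large_tree x K) (large_tree a K0) by move=> u /XS /SA.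
have YB : subtree (large_tree y K) (large_tree b K0) by move=> u /YS' /SB.
have [ex ex_e] := prefixP (large_subtree_stem hK XA).
have [ey ey_e] := prefixP (large_subtree_stem hK YB).
subst x y; exists ex, ey, K; split=> //.
by move: hxy; rewrite !size_cat hab => /addnI.
Qed.

Lemma P_translate_branch a c e K K0 : size a = size c ->
  P (large_tree (a ++ e) K) -> subtree (large_tree (a ++ e) K) (large_tree a K0) ->
  P (large_tree (c ++ e) K) /\ subtree (large_tree (c ++ e) K) (large_tree c K0).
Proof.
case: hP => _ _ hdot hac PX XA.
rewrite -(dotT_large_tree_cat e K hac) -(dotT_large_tree_same_size K0 hac).
by split; [exact: hdot | exact: subtree_dotT].
Qed.

Lemma fuse_pair m r q s t : large_blocks q -> LC m.+1 P (large_tree r q) ->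
  size s = m.+1 -> size t = m.+1 -> nth false s m != nth false t m ->
  exists q', [/\ large_blocks q', (forall j, j < m -> q' j = q j),
    LC m.+1 P (large_tree r q'),
    sub_branches m.+1 (large_tree r q') (large_tree r q)
  & D (toS (large_tree r q') s) (toS (large_tree r q') t)].
Proof.
move=> hq hLC hs ht hst.
have size_branch u : size u = m.+1 -> size (node r q s) = size (node r q u).
  by move=> hu; apply: size_node; rewrite ?hs ?hu.
have := cprod_toS hq hLC hs ht; rewrite !toS_large_tree // hs ht.
case/(D_below_large_pair (size_branch t ht)) => ex [ey [K [hK hexy XA YB hXY]]].
case: (hD) => hD1 _ _; have [PX PY _] := hD1 _ _ hXY.
exists (graft m q (nth false s m) ex ey K).
have branch_facts u : size u = m.+1 ->
    P (toS (large_tree r (graft m q (nth false s m) ex ey K)) u) /\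
    subtree (toS (large_tree r (graft m q (nth false s m) ex ey K)) u) (toS (large_tree r q) u).
  move=> hu; rewrite toS_graft // toS_large_tree // hu; case: ifP => _.
    exact: P_translate_branch (size_branch u hu) PX XA.
  by apply: P_translate_branch (etrans (esym (size_branch t ht)) (size_branch u hu)) PY YB.
split.
- exact: large_blocks_graft.
- exact: graft_low.
- by split; [exact/LT_large_tree/large_blocks_graft | move=> u /branch_facts[]].
- by move=> u /branch_facts[].
by rewrite !toS_graft // eqxx eq_sym (negbTE hst).
Qed.

Lemma fuse_pairs m r q (L : seq (str * str)) : large_blocks q -> LC m.+1 P (large_tree r q) ->
  exists q', [/\ large_blocks q', (forall j, j < m -> q' j = q j),
    LC m.+1 P (large_tree r q'), sub_branches m.+1 (large_tree r q') (large_tree r q)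
  & forall s t, (s, t) \in L -> size s = m.+1 -> size t = m.+1 ->
      nth false s m != nth false t m -> D (toS (large_tree r q') s) (toS (large_tree r q') t)].
Proof.
move=> hq hLC; elim: L => [|[s t] L [q1 [hq1 low1 hLC1 sub1 hD1]]].
  by exists q; split=> // u _ v.
have [/and3P[/eqP hs /eqP ht hst] | skip] :=
  boolP [&& size s == m.+1, size t == m.+1 & nth false s m != nth false t m]; last first.
  exists q1; split=> // s' t'; rewrite in_cons => /orP[/eqP[-> ->] hs ht hst | /hD1//].
  by move: skip; rewrite hs ht hst !eqxx.
have [q2 [hq2 low2 hLC2 sub2 hD2]] := fuse_pair hq1 hLC1 hs ht hst.
exists q2; split=> //.
- by move=> j hj; rewrite low2 // low1.
- exact: sub_branches_trans sub2 sub1.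
move=> s' t'; rewrite in_cons => /orP[/eqP[-> ->] // | /hD1 hD1' hs' ht' hst'].
case: hD => _ hopen _; apply: hopen (hD1' hs' ht' hst') (cprod_toS hq2 hLC2 hs' ht') _.
by split; apply: sub2.
Qed.

End Fusion.

Theorem lemma5p2 (P : tree -> Prop) (n : nat) (P0 : tree)
    (D : tree -> tree -> Prop) :
  LTF P -> 1 <= n -> LC n P P0 -> open_dense P D ->
  exists Q : tree, [/\ LC n P Q, sub_n Q P0 n &
    forall s t : str, size s = n -> size t = n ->
      nth false s n.-1 != nth false t n.-1 ->
      D (toS Q s) (toS Q t)].
Proof.
case: n => [//|m] hP _ hLC hD.
have [r [q [hq eP0]]] := LT_large_treeE (proj1 hLC); subst P0.
pose strs := [seq val x | x <- enum {: m.+1.-tuple bool}].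
have strsP s : size s = m.+1 -> s \in strs.
  by move=> /eqP hs; apply/mapP; exists (Tuple hs); rewrite ?mem_enum.
have [q' [hq' low hLC' sub hDL]] := fuse_pairs hP hD [seq (s, t) | s <- strs, t <- strs] hq hLC.
exists (large_tree r q'); split=> //.
- split=> [|k hk]; first exact: subtree_of_branches sub.
  rewrite !spl_large_tree //; congr (_ + _); apply: eq_bigr => j _.
  by rewrite low // (leq_trans (ltn_ord j)).
by move=> s t hs ht; apply: hDL => //; apply: allpairs_f; exact: strsP.
Qed.
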